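(* Let $R^*=\sup\{R(\theta_0,s):\theta_0\in[0,\bar\theta),\ s\in\mathcal S(\theta_0)\}$, where $R(\theta_0,s)=\int_{\theta_0}^{\bar\theta}J(\theta)s(\theta)\,dF(\theta)+v(\theta_0)(1-F(\theta_0))$, and let $$R_1=\sup_{\theta\in[0,\bar\theta)}\Big(\theta\,\tfrac{1+F(\theta)}{2}+v(\theta)\Big)\big(1-F(\theta)\big)$$ be the maximal revenue from selling a single positional good (all participants pooled at one level). Then $R_1\ge \tfrac12 R^*$. No regularity assumption on $F$ (such as monotonicity of $J$) is required.
   Context: Let $0<\bar\theta<\infty$, $\Theta=[0,\bar\theta]$, $F$ a cdf on $\Theta$ with continuous, strictly positive density $f$, $dF=f\,d\theta$, and $J(\theta)=\theta-\frac{1-F(\theta)}{f(\theta)}$. The intrinsic value $v:\Theta\to[0,\infty)$ is twice continuously differentiable with $v'\ge0$, $v''\le0$. For $\theta_0\in[0,\bar\theta)$ and bounded measurable $a,b:[\theta_0,\bar\theta]\to\mathbb R$, write $b\in\mathrm{MPS}(a)$ on $[\theta_0,\bar\theta]$ if $\int_x^{\bar\theta}b\,dF\le\int_x^{\bar\theta}a\,dF$ for all $x\in[\theta_0,\bar\theta]$, with equality at $x=\theta_0$. Let $\mathcal S(\theta_0)$ be the set of nondecreasing $s:[\theta_0,\bar\theta]\to[0,1]$ with $s\in\mathrm{MPS}(F)$ on $[\theta_0,\bar\theta]$. $R(\theta_0,s)$ is the seller's expected revenue from the mechanism with participation cutoff $\theta_0$ and interim status $s$, where a buyer of type $\theta$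 paying $p$ for status $\sigma$ gets $\theta\sigma-p+v(\theta)$. *)

From Stdlib Require Import Reals Lra.
From Coquelicot Require Import Coquelicot.
Open Scope R_scope.

Definition Jvv (F f : R -> R) (t : R) : R := t - (1 - F t) / f t.

Definition MPS (f : R -> R) (t0 tb : R) (b a : R -> R) : Prop :=
  (forall x, t0 <= x <= tb ->
     RInt (fun t => b t * f t) x tb <= RInt (fun t => a t * f t) x tb) /\
  RInt (fun t => b t * f t) t0 tb = RInt (fun t => a t * f t) t0 tb.

Definition Sadm (F f : R -> R) (tb t0 : R) (s : R -> R) : Prop :=
  (forall x y, t0 <= x -> x <= y -> y <= tb -> s x <= s y) /\
  (forall x, t0 <= x <= tb -> 0 <= s x <= 1) /\
  MPS f t0 tb s F.

Definition Rev (F f v : R -> R) (tb t0 : R) (s : R -> R) : R :=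
  RInt (fun t => Jvv F f t * s t * f t) t0 tb + v t0 * (1 - F t0).

Definition Rstar (F f v : R -> R) (tb : R) : Rbar :=
  Lub_Rbar (fun r => exists t0 s, 0 <= t0 < tb /\ Sadm F f tb t0 s /\
                                  r = Rev F f v tb t0 s).

Definition Rone (F v : R -> R) (tb : R) : Rbar :=
  Lub_Rbar (fun r => exists t, 0 <= t < tb /\
                       r = (t * ((1 + F t) / 2) + v t) * (1 - F t)).

From Stdlib Require Import Reals Lra Lia.
From Coquelicot Require Import Coquelicot.
Open Scope R_scope.

(* Put v0 := v θ0 and Φ(t) := (t + 2 v0)(1 - F t).  Then J f = -Φ' - 2 v0 f, and the equality
   part of s ∈ MPS(F) gives ∫ s dF = ∫ F dF = (1 - F(θ0)²)/2, so
     R(θ0, s) = -∫ Φ' s - v0 F(θ0) (1 - F(θ0)) ≤ -∫ Φ' s.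
   A nondecreasing s with values in [0,1] is an average of indicators of its superlevel sets,
   which are terminal intervals [m, θ̄]; hence
     -∫ Φ' s ≤ sup_x (Φ x - Φ θ̄) = sup_x (x + 2 v0)(1 - F x).
   As v is nondecreasing and 1 ≤ 1 + F x, each such term is at most twice the single-good
   revenue at x. *)

Definition clamp (a b t : R) : R := Rmax a (Rmin b t).

Lemma clamp_in a b t : a <= b -> a <= clamp a b t <= b.
Proof. intros; unfold clamp, Rmax, Rmin; repeat destruct Rle_dec; lra. Qed.

Lemma clamp_id a b t : a <= t <= b -> clamp a b t = t.
Proof. intros; unfold clamp, Rmax, Rmin; repeat destruct Rle_dec; lra. Qed.

Lemma clamp_dist a b x y : a <= b -> Rabs (clamp a b x - clamp a b y) <= Rabs (x - y).
Proof.
  intros; unfold clamp, Rmax, Rmin; repeat destruct Rle_dec;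
  unfold Rabs; repeat destruct Rcase_abs; lra.
Qed.

Lemma continuous_clamp a b x : a <= b -> continuous (clamp a b) x.
Proof.
  intros Hab. apply continuity_pt_filterlim. intros e He.
  exists e; split; [exact He |]. intros y [_ Hy]. simpl in *. unfold R_dist in *.
  eapply Rle_lt_trans; [apply clamp_dist |]; eassumption.
Qed.

Lemma is_RInt_zero (a b : R) : is_RInt (fun _ => 0) a b 0.
Proof.
  pose proof (@is_RInt_const R_NormedModule a b 0) as H.
  change (scal (b - a) 0) with ((b - a) * 0) in H. rewrite Rmult_0_r in H. exact H.
Qed.

Definition indic_ge (y x : R) : R := if Rle_dec y x then 1 else 0.

Fixpoint stair (N : nat) (x : R) : R :=
  match N with
  | O => 0
  | S k => stair k x + indic_ge (INR (S k)) x
  end.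

Lemma stair_spec (x : R) : 0 <= x -> forall N,
  (INR N <= x -> stair N x = INR N) /\ (x < INR N -> stair N x <= x < stair N x + 1).
Proof.
  intros Hx. induction N as [|N [IH1 IH2]]; [simpl; split; intros; [reflexivity | lra] |].
  change (stair (S N) x) with (stair N x + indic_ge (INR (S N)) x).
  unfold indic_ge. rewrite S_INR. split.
  - intros H. rewrite IH1 by lra. destruct Rle_dec; [ring | lra].
  - intros H. destruct Rle_dec as [H'|H']; [lra |].
    destruct (Rle_dec (INR N) x) as [H2|H2].
    + rewrite IH1 by lra. lra.
    + specialize (IH2 ltac:(lra)). lra.
Qed.

Lemma stair_scaled_approx (N : nat) (x : R) : (0 < N)%nat -> 0 <= x <= 1 ->
  Rabs (stair N (INR N * x) / INR N - x) <= / INR N.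
Proof.
  intros HN Hx. assert (HN' : 0 < INR N) by (apply lt_0_INR; exact HN).
  assert (Hx0 : 0 <= INR N * x) by (apply Rmult_le_pos; lra).
  destruct (stair_spec (INR N * x) Hx0 N) as [Hfull Hpart].
  destruct (Rle_dec (INR N) (INR N * x)) as [Hge | Hlt].
  - rewrite Hfull by exact Hge.
    assert (Hx1 : x = 1) by nra. subst x.
    replace (INR N / INR N - 1) with 0 by (field; lra).
    rewrite Rabs_R0. left. apply Rinv_0_lt_compat, HN'.
  - specialize (Hpart ltac:(lra)).
    set (q := stair N (INR N * x)) in *.
    replace (q / INR N - x) with (- ((INR N * x - q) / INR N)) by (field; lra).
    rewrite Rabs_Ropp, Rabs_right.
    + unfold Rdiv. rewrite <- (Rmult_1_l (/ INR N)) at 2.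
      apply Rmult_le_compat_r; [left; apply Rinv_0_lt_compat |]; lra.
    + apply Rle_ge, Rdiv_le_0_compat; lra.
Qed.

Lemma filterlim_mult_uniform (c st : R -> R) (q : nat -> R -> R) (M : R) :
  (forall t, Rabs (c t) <= M) ->
  (forall n t, Rabs (q n t - st t) <= / INR (S n)) ->
  filterlim (fun n t => c t * q n t) eventually (locally (fun t => c t * st t)).
Proof.
  intros Hc Hq P [eps HP].
  assert (HM : 0 < M + 1) by (pose proof (Hc 0); pose proof (Rabs_pos (c 0)); lra).
  assert (He : 0 < eps / (M + 1)) by (apply Rdiv_lt_0_compat; [apply cond_pos | exact HM]).
  destruct (archimed_cor1 _ He) as [N [HN HN0]].
  assert (HN' : 0 < INR N) by (apply lt_0_INR; lia).
  exists N. intros n Hn. apply HP. intros t.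
  change (Rabs (c t * q n t - c t * st t) < eps).
  assert (HNn : / INR (S n) <= / INR N)
    by (apply Rinv_le_contravar; [exact HN' | apply le_INR; lia]).
  rewrite <- Rmult_minus_distr_l, Rabs_mult.
  apply Rle_lt_trans with ((M + 1) * / INR N).
  - apply Rmult_le_compat; try apply Rabs_pos; [pose proof (Hc t); lra |].
    eapply Rle_trans; [apply Hq | exact HNn].
  - apply Rmult_lt_reg_l with (/ (M + 1)); [apply Rinv_0_lt_compat; lra |].
    replace (/ (M + 1) * ((M + 1) * / INR N)) with (/ INR N) by (field; lra).
    replace (/ (M + 1) * eps) with (eps / (M + 1)) by (unfold Rdiv; ring). exact HN.
Qed.

Section MonotoneWeight.

Variables (Phi Phi' : R -> R) (a b : R).
Hypothesis Hab : a <= b.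
Hypothesis Phi_derive : forall x, is_derive Phi x (Phi' x).
Hypothesis Phi'_cont : forall x, continuous Phi' x.

(* The superlevel set {g >= y} of a nondecreasing g is [m, b] up to the endpoint m. *)
Lemma is_RInt_superlevel (g : R -> R) (y : R) :
  (forall x z, a <= x -> x <= z -> z <= b -> g x <= g z) ->
  exists m, a <= m <= b /\
    is_RInt (fun t => Phi' t * indic_ge y (g t)) a b (Phi b - Phi m).
Proof.
  intros Hg.
  set (E := fun t => t = a \/ (a <= t <= b /\ g t < y)).
  assert (HE : exists x, E x) by (exists a; left; reflexivity).
  assert (HB : bound E) by (exists b; intros t [-> | Ht]; lra).
  destruct (completeness E HB HE) as [m [Hub Hlub]].
  assert (Ham : a <= m) by (apply Hub; left; reflexivity).
  assert (Hmb : m <= b) by (apply Hlub; intros t [-> | Ht]; lra).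
  exists m; split; [lra |].
  assert (Hbelow : is_RInt (fun t => Phi' t * indic_ge y (g t)) a m 0).
  { apply is_RInt_ext with (fun _ => 0); [| apply is_RInt_zero].
    intros t Ht. rewrite Rmin_left, Rmax_right in Ht by lra.
    unfold indic_ge. destruct Rle_dec as [Hy | Hy]; [| rewrite Rmult_0_r; reflexivity].
    enough (Hu : is_upper_bound E t) by (specialize (Hlub t Hu); lra).
    intros e [-> | [He Hge]]; [lra |].
    apply Rnot_lt_le. intros Hte. assert (g t <= g e) by (apply Hg; lra). lra. }
  assert (Habove : is_RInt (fun t => Phi' t * indic_ge y (g t)) m b (Phi b - Phi m)).
  { apply is_RInt_ext with Phi';
      [| exact (is_RInt_derive Phi Phi' m b (fun x _ => Phi_derive x) (fun x _ => Phi'_cont x))].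
    intros t Ht. rewrite Rmin_left, Rmax_right in Ht by lra.
    unfold indic_ge. destruct Rle_dec as [Hy | Hy]; [symmetry; apply Rmult_1_r |].
    assert (Et : E t) by (right; split; lra). specialize (Hub t Et). lra. }
  pose proof (is_RInt_Chasles _ _ _ _ _ _ Hbelow Habove) as H.
  change (plus 0 (Phi b - Phi m)) with (0 + (Phi b - Phi m)) in H.
  rewrite Rplus_0_l in H. exact H.
Qed.

Lemma is_RInt_stair (g : R -> R) :
  (forall x z, a <= x -> x <= z -> z <= b -> g x <= g z) ->
  forall N, exists I, is_RInt (fun t => Phi' t * stair N (g t)) a b I /\
    (forall K, (forall x, a <= x <= b -> Phi x - Phi b <= K) -> - I <= INR N * K).
Proof.
  intros Hg N. induction N as [|N [I [HI HK]]].
  - exists 0. split; [| intros K _; simpl; lra].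
    apply is_RInt_ext with (fun _ => 0); [| apply is_RInt_zero].
    intros t _. simpl. ring.
  - destruct (is_RInt_superlevel g (INR (S N)) Hg) as [m [Hm Hstep]].
    exists (I + (Phi b - Phi m)). split.
    + apply (is_RInt_ext (fun t => Phi' t * stair N (g t) + Phi' t * indic_ge (INR (S N)) (g t))).
      * intros t _. simpl. ring.
      * exact (is_RInt_plus _ _ _ _ _ _ HI Hstep).
    + intros K HK'. specialize (HK K HK'). specialize (HK' m Hm). rewrite S_INR. lra.
Qed.

Lemma is_RInt_scaled_stair (s : R -> R) (N : nat) : (0 < N)%nat ->
  (forall x z, a <= x -> x <= z -> z <= b -> s x <= s z) ->
  exists I, is_RInt (fun t => Phi' t * (stair N (INR N * s t) / INR N)) a b I /\
    (forall K, (forall x, a <= x <= b -> Phi x - Phi b <= K) -> - I <= K).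
Proof.
  intros HN Hs. assert (HN' : 0 < INR N) by (apply lt_0_INR, HN).
  assert (Hg : forall x z, a <= x -> x <= z -> z <= b -> INR N * s x <= INR N * s z)
    by (intros x z Hx Hxz Hz; apply Rmult_le_compat_l; [lra | apply Hs; lra]).
  destruct (is_RInt_stair _ Hg N) as [I [HI HK]].
  exists (I / INR N). split.
  - apply (is_RInt_ext (fun t => scal (/ INR N) (Phi' t * stair N (INR N * s t)))).
    + intros t _. change (/ INR N * (Phi' t * stair N (INR N * s t))
                          = Phi' t * (stair N (INR N * s t) / INR N)).
      unfold Rdiv. ring.
    + replace (I / INR N) with (scal (/ INR N) I) by (unfold Rdiv; apply Rmult_comm).
      exact (is_RInt_scal _ _ _ _ _ HI).
  - intros K HK'. specialize (HK K HK'). apply Rmult_le_reg_l with (INR N); [exact HN' |].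
    replace (INR N * - (I / INR N)) with (- I) by (field; lra). lra.
Qed.

(* Layer cake in discrete form: (1/N) stair N (N s) approximates s uniformly within 1/N. *)
Lemma RInt_derive_monotone (s : R -> R) :
  (forall x z, a <= x -> x <= z -> z <= b -> s x <= s z) ->
  (forall x, a <= x <= b -> 0 <= s x <= 1) ->
  ex_RInt (fun t => Phi' t * s t) a b /\
  (forall K, (forall x, a <= x <= b -> Phi x - Phi b <= K) ->
     - RInt (fun t => Phi' t * s t) a b <= K).
Proof.
  intros Hs Hs01.
  set (sc := fun t => s (clamp a b t)).
  set (q := fun (n : nat) t => stair (S n) (INR (S n) * sc t) / INR (S n)).
  set (fn := fun n t => Phi' (clamp a b t) * q n t).
  assert (Hfn : forall n, ex_RInt (fn n) a b /\
    forall K, (forall x, a <= x <= b -> Phi x - Phi b <= K) -> - RInt (fn n) a b <= K).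
  { intros n. destruct (is_RInt_scaled_stair s (S n) (Nat.lt_0_succ n) Hs) as [I [HI HK]].
    assert (HIn : is_RInt (fn n) a b I).
    { apply is_RInt_ext with (2 := HI). intros t Ht. rewrite Rmin_left, Rmax_right in Ht by lra.
      unfold fn, q, sc. rewrite clamp_id by lra. reflexivity. }
    split; [exists I; exact HIn |].
    intros K HK'. rewrite (is_RInt_unique _ _ _ _ HIn). exact (HK K HK'). }
  destruct (ex_RInt_ub Phi' a b (ex_RInt_continuous Phi' a b (fun z _ => Phi'_cont z)))
    as [M HM].
  assert (HPhi'M : forall t, Rabs (Phi' (clamp a b t)) <= M).
  { intros t. pose proof (clamp_in a b t Hab). apply HM. rewrite Rmin_left, Rmax_right; lra. }
  assert (Hq : forall n t, Rabs (q n t - sc t) <= / INR (S n))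
    by (intros n t; apply stair_scaled_approx; [lia | apply Hs01, clamp_in, Hab]).
  destruct (filterlim_RInt fn a b eventually eventually_filter
              (fun t => Phi' (clamp a b t) * sc t) (fun n => RInt (fn n) a b)
              (fun n => RInt_correct _ _ _ (proj1 (Hfn n)))
              (filterlim_mult_uniform _ _ _ M HPhi'M Hq)) as [I [Hlim HI]].
  assert (HI' : is_RInt (fun t => Phi' t * s t) a b I).
  { apply is_RInt_ext with (2 := HI). intros t Ht. rewrite Rmin_left, Rmax_right in Ht by lra.
    unfold sc. rewrite clamp_id by lra. reflexivity. }
  split; [exists I; exact HI' |].
  intros K HK. rewrite (is_RInt_unique _ _ _ _ HI').
  assert (Hle : Rbar_le (- K) I).
  { apply (is_lim_seq_le (fun _ => - K) (fun n => RInt (fn n) a b));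
      [| apply is_lim_seq_const | exact Hlim].
    intros n. pose proof (proj2 (Hfn n) K HK). lra. }
  simpl in Hle. lra.
Qed.

End MonotoneWeight.

Lemma nondecreasing_of_derive (g dg : R -> R) (a b : R) :
  (forall x, a <= x <= b -> is_derive g x (dg x) /\ 0 <= dg x) ->
  forall x y, a <= x -> x <= y -> y <= b -> g x <= g y.
Proof.
  intros Hg x y Hx Hxy Hy.
  destruct (Req_dec x y) as [-> | Hne]; [lra |].
  destruct (MVT_gen g x y dg) as [c [Hc Heq]];
    rewrite ?Rmin_left, ?Rmax_right in * by lra.
  - intros z Hz. apply Hg. lra.
  - intros z Hz. apply continuity_pt_filterlim, (ex_derive_continuous (V := R_NormedModule)).
    exists (dg z). apply Hg. lra.
  - assert (0 <= dg c) by (apply Hg; lra). nra.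
Qed.

Lemma Rbar_half_le (L : Rbar) (r : R) : Rbar_le L (2 * r) -> Rbar_le (Rbar_mult (/ 2) L) r.
Proof.
  destruct L as [L | |]; simpl; intros HL; [lra | contradiction |].
  destruct (Rle_dec 0 (/ 2)) as [H | H]; [| lra].
  destruct (Rle_lt_or_eq_dec 0 (/ 2) H); [exact I | lra].
Qed.

Section Revenue.

Variables (tb : R) (F f v : R -> R).
Hypothesis tb_pos : 0 < tb.
Hypothesis f_cont : forall x, 0 <= x <= tb -> continuous f x.
Hypothesis f_pos : forall x, 0 <= x <= tb -> 0 < f x.
Hypothesis F_def : forall x, 0 <= x <= tb -> F x = RInt f 0 x.
Hypothesis F_tb : F tb = 1.
Hypothesis v_nonneg : forall x, 0 <= x <= tb -> 0 <= v x.
Hypothesis v_le : forall x y, 0 <= x -> x <= y -> y <= tb -> v x <= v y.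

(* Extending f by its boundary values makes F differentiable on all of R, with the
   two-sided derivatives at 0 and tb that the fundamental theorem of calculus needs. *)
Let fe (t : R) : R := f (clamp 0 tb t).
Let Fe (x : R) : R := RInt fe 0 x.

Lemma continuous_fe x : continuous fe x.
Proof.
  apply (continuous_comp (clamp 0 tb) f); [apply continuous_clamp; lra |].
  apply f_cont, clamp_in. lra.
Qed.

Lemma fe_pos x : 0 < fe x.
Proof. apply f_pos, clamp_in. lra. Qed.

Lemma ex_RInt_fe x y : ex_RInt fe x y.
Proof. apply (ex_RInt_continuous (V := R_CompleteNormedModule)). intros; apply continuous_fe. Qed.

Lemma is_derive_Fe x : is_derive Fe x (fe x).
Proof.
  apply is_derive_RInt with 0; [| apply continuous_fe].
  apply filter_forall. intros y. apply (RInt_correct (V := R_CompleteNormedModule)), ex_RInt_fe.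
Qed.

Lemma Fe_eq x : 0 <= x <= tb -> Fe x = F x.
Proof.
  intros Hx. rewrite F_def by exact Hx. apply RInt_ext.
  intros y Hy. rewrite Rmin_left, Rmax_right in Hy by lra.
  unfold fe. rewrite clamp_id by lra. reflexivity.
Qed.

Lemma Fe_le x y : x <= y -> Fe x <= Fe y.
Proof.
  intros Hxy. unfold Fe. rewrite <- (RInt_Chasles fe 0 x y) by apply ex_RInt_fe.
  assert (0 <= RInt fe x y)
    by (apply RInt_ge_0; [exact Hxy | apply ex_RInt_fe | intros; left; apply fe_pos]).
  change (plus (RInt fe 0 x) (RInt fe x y)) with (RInt fe 0 x + RInt fe x y). lra.
Qed.

Lemma F_bounds x : 0 <= x <= tb -> 0 <= F x <= 1.
Proof.
  intros Hx. rewrite <- F_tb, <- !Fe_eq by lra.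
  replace 0 with (Fe 0) at 1 by (unfold Fe; rewrite RInt_point; reflexivity).
  split; apply Fe_le; lra.
Qed.

Lemma RInt_cdf_density t0 : 0 <= t0 <= tb ->
  RInt (fun t => F t * f t) t0 tb = (1 - F t0 ^ 2) / 2.
Proof.
  intros Ht0. apply is_RInt_unique.
  assert (Hd : forall x, is_derive (fun t => Fe t ^ 2 / 2) x (Fe x * fe x)).
  { intros x. auto_derive; [exists (fe x); apply is_derive_Fe |].
    replace (Derive (fun t => Fe t) x) with (fe x)
      by (symmetry; apply is_derive_unique, is_derive_Fe).
    field. }
  assert (Hc : forall x, continuous (fun t => Fe t * fe t) x).
  { intros x. apply (continuous_mult (K := R_AbsRing)); [| apply continuous_fe].
    apply (ex_derive_continuous (V := R_NormedModule)). exists (fe x). apply is_derive_Fe. }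
  pose proof (is_RInt_derive (V := R_CompleteNormedModule) _ _ t0 tb
                (fun x _ => Hd x) (fun x _ => Hc x)) as H.
  change (minus ?u ?w) with (u - w) in H.
  cbv beta in H. rewrite !Fe_eq, F_tb in H by lra.
  replace ((1 - F t0 ^ 2) / 2) with (1 ^ 2 / 2 - F t0 ^ 2 / 2) by field.
  apply is_RInt_ext with (2 := H). intros x Hx. rewrite Rmin_left, Rmax_right in Hx by lra.
  rewrite Fe_eq by lra. unfold fe. rewrite clamp_id by lra. reflexivity.
Qed.

Let Phi (v0 t : R) : R := (t + 2 * v0) * (1 - Fe t).
Let Phi' (v0 t : R) : R := (1 - Fe t) - (t + 2 * v0) * fe t.

Lemma is_derive_Phi v0 x : is_derive (Phi v0) x (Phi' v0 x).
Proof.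
  unfold Phi. auto_derive; [exists (fe x); apply is_derive_Fe |].
  replace (Derive (fun t => Fe t) x) with (fe x)
    by (symmetry; apply is_derive_unique, is_derive_Fe).
  unfold Phi'. ring.
Qed.

Lemma continuous_Phi' v0 x : continuous (Phi' v0) x.
Proof.
  assert (HFe : continuous Fe x).
  { apply (ex_derive_continuous (V := R_NormedModule)). exists (fe x). apply is_derive_Fe. }
  apply (continuous_minus (V := R_NormedModule)).
  - apply (continuous_minus (V := R_NormedModule)); [apply continuous_const | exact HFe].
  - apply (continuous_mult (K := R_AbsRing)); [| apply continuous_fe].
    apply (continuous_plus (V := R_NormedModule)); [apply continuous_id | apply continuous_const].
Qed.

Lemma Jvv_weighted_eq v0 w x : 0 <= x <= tb ->
  Jvv F f x * w * f x = -1 * (Phi' v0 x * w) + -2 * v0 * (fe x * w).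
Proof.
  intros Hx. assert (f x <> 0) by (apply Rgt_not_eq, f_pos, Hx).
  unfold Phi', Jvv, fe. rewrite Fe_eq, clamp_id by exact Hx. field. auto.
Qed.

Lemma Phi_le_single_good (r1 t0 x : R) :
  (forall t, 0 <= t < tb -> (t * ((1 + F t) / 2) + v t) * (1 - F t) <= r1) ->
  0 <= t0 < tb -> t0 <= x <= tb -> Phi (v t0) x - Phi (v t0) tb <= 2 * r1.
Proof.
  intros Hr1 Ht0 Hx. unfold Phi. rewrite !Fe_eq, F_tb by lra.
  pose proof (F_bounds t0 ltac:(lra)). pose proof (F_bounds x ltac:(lra)).
  pose proof (v_nonneg t0 ltac:(lra)).
  assert (Hr1_nonneg : 0 <= r1).
  { eapply Rle_trans; [| apply Hr1, Ht0].
    apply Rmult_le_pos; [apply Rplus_le_le_0_compat |]; [apply Rmult_le_pos | |]; lra. }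
  destruct (Req_dec x tb) as [-> | Hxtb]; [rewrite F_tb; lra |].
  pose proof (Hr1 x ltac:(lra)). pose proof (v_le t0 x ltac:(lra) ltac:(lra) ltac:(lra)).
  assert (0 <= x * F x * (1 - F x)) by (apply Rmult_le_pos; [apply Rmult_le_pos |]; lra).
  assert (0 <= (v x - v t0) * (1 - F x)) by (apply Rmult_le_pos; lra).
  apply Rle_trans with (2 * ((x * ((1 + F x) / 2) + v x) * (1 - F x))); [| lra].
  apply Rle_trans with ((x + 2 * v t0) * (1 - F x) + x * F x * (1 - F x)
                          + 2 * ((v x - v t0) * (1 - F x))); [lra | right; field].
Qed.

Lemma Rev_le_twice (r1 t0 : R) (s : R -> R) :
  (forall t, 0 <= t < tb -> (t * ((1 + F t) / 2) + v t) * (1 - F t) <= r1) ->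
  0 <= t0 < tb -> Sadm F f tb t0 s -> Rev F f v tb t0 s <= 2 * r1.
Proof.
  intros Hr1 Ht0 [Hs [Hs01 [_ Hmass]]].
  set (v0 := v t0).
  destruct (RInt_derive_monotone (Phi v0) (Phi' v0) t0 tb ltac:(lra)
              (is_derive_Phi v0) (continuous_Phi' v0) s Hs Hs01) as [HexPhi HlbPhi].
  destruct (RInt_derive_monotone Fe fe t0 tb ltac:(lra)
              is_derive_Fe continuous_fe s Hs Hs01) as [Hexfe _].
  assert (Hfe_mass : RInt (fun t => fe t * s t) t0 tb = (1 - F t0 ^ 2) / 2).
  { rewrite <- RInt_cdf_density, <- Hmass by lra. apply RInt_ext.
    intros x Hx. rewrite Rmin_left, Rmax_right in Hx by lra.
    unfold fe. rewrite clamp_id by lra. apply Rmult_comm. }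
  assert (HJ : RInt (fun t => Jvv F f t * s t * f t) t0 tb =
               -1 * RInt (fun t => Phi' v0 t * s t) t0 tb
               + -2 * v0 * RInt (fun t => fe t * s t) t0 tb).
  { apply is_RInt_unique.
    pose proof (is_RInt_plus _ _ _ _ _ _
                  (is_RInt_scal _ _ _ (-1) _ (RInt_correct _ _ _ HexPhi))
                  (is_RInt_scal _ _ _ (-2 * v0) _ (RInt_correct _ _ _ Hexfe))) as H.
    change (is_RInt (fun t => -1 * (Phi' v0 t * s t) + -2 * v0 * (fe t * s t)) t0 tb
              (-1 * RInt (fun t => Phi' v0 t * s t) t0 tb
               + -2 * v0 * RInt (fun t => fe t * s t) t0 tb)) in H.
    apply is_RInt_ext with (2 := H). intros x Hx. rewrite Rmin_left, Rmax_right in Hx by lra.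
    symmetry. apply Jvv_weighted_eq. lra. }
  pose proof (HlbPhi (2 * r1) (fun x Hx => Phi_le_single_good r1 t0 x Hr1 Ht0 Hx)).
  pose proof (F_bounds t0 ltac:(lra)). assert (Hv0 : 0 <= v0) by (apply v_nonneg; lra).
  assert (0 <= v0 * F t0 * (1 - F t0)) by (apply Rmult_le_pos; [apply Rmult_le_pos |]; lra).
  unfold Rev. fold v0. rewrite HJ, Hfe_mass.
  set (A := RInt (fun t => Phi' v0 t * s t) t0 tb) in *.
  apply Rle_trans with (- A - v0 * F t0 * (1 - F t0)); [right; field | lra].
Qed.

End Revenue.

Theorem proposition2 (tb : R) (F f v : R -> R) :
  0 < tb ->
  (forall x, 0 <= x <= tb -> continuous f x) ->
  (forall x, 0 <= x <= tb -> 0 < f x) ->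
  (forall x, 0 <= x <= tb -> F x = RInt f 0 x) ->
  F tb = 1 ->
  (exists v1 v2 : R -> R,
     forall x, 0 <= x <= tb ->
       is_derive v x (v1 x) /\ is_derive v1 x (v2 x) /\ continuous v2 x /\
       0 <= v x /\ 0 <= v1 x /\ v2 x <= 0) ->
  Rbar_le (Rbar_mult (/ 2) (Rstar F f v tb)) (Rone F v tb).
Proof.
  intros Htb Hfc Hfp HF HF1 [v1 [v2 Hv]].
  assert (Hv_nonneg : forall x, 0 <= x <= tb -> 0 <= v x) by (intros x Hx; apply Hv, Hx).
  assert (Hv_le : forall x y, 0 <= x -> x <= y -> y <= tb -> v x <= v y)
    by (apply (nondecreasing_of_derive v v1); intros x Hx; split; apply Hv, Hx).
  unfold Rone.
  set (E1 := fun r => exists t, 0 <= t < tb /\ r = (t * ((1 + F t) / 2) + v t) * (1 - F t)).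
  destruct (Lub_Rbar_correct E1) as [Hub1 _].
  destruct (Lub_Rbar E1) as [r1 | |].
  - apply Rbar_half_le. unfold Rstar. apply Lub_Rbar_correct.
    intros r [t0 [s [Ht0 [Hs ->]]]].
    apply (Rev_le_twice tb F f v); auto.
    intros t Ht. exact (Hub1 _ (ex_intro _ t (conj Ht eq_refl))).
  - now destruct (Rbar_mult _ _).
  - destruct (Hub1 _ (ex_intro _ 0 (conj (conj (Rle_refl 0) Htb) eq_refl))).
Qed.
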